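(* Let $\Gamma$ be a weighted digraph with vertex set $\{1,\dots,n\}$, $n>1$, without loops and with strictly positive arc weights, with Laplacian matrix $L$ and matrices of in-forests $Q_k$. Then each $Q_k$, $k=0,1,\dots$, commutes with every matrix that commutes with $L$; in particular the matrices $Q_k$ commute with $L$, with $Q(\tau)=\sum_{k\ge0}Q_k\tau^k$ for every $\tau$, and with each other.
   Context: $W=(w_{ij})$ is the matrix of arc weights ($w_{ij}>0$ iff there is an arc $i\to j$, else $0$). The Laplacian $L=(\ell_{ij})$: $\ell_{ij}=-w_{ij}$ for $j\ne i$, $\ell_{ii}=\sum_{k\ne i}w_{ik}$. The weight of a subgraph is the product of its arc weights (1 if no arcs); the weight of a set of subgraphs is the sum of their weights (0 for the empty set). A converging tree is a weakly connected digraph with one vertex (the root) of outdegree 0 and all others of outdegree 1; an in-forest is a spanning subgraph of $\Gamma$ whose weak components are converging trees. $Q_k=(q^k_{ij})$ where $q^k_{ij}$ is the total weight of in-forests with $k$ arcs in which $i$ lies in a tree rooted at $j$ (so $Q_k=0$ for large $k$ and the sum defining $Q(\tau)$ is finite). *)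

From HB Require Import structures.
From mathcomp Require Import all_boot all_order all_algebra.
Set Implicit Arguments. Unset Strict Implicit. Unset Printing Implicit Defensive.
Import Order.TTheory GRing.Theory Num.Theory.
Local Open Scope ring_scope.

Section Forests.
Variables (R : realFieldType) (n : nat).
Implicit Types (W : 'M[R]_n) (F : {set 'I_n * 'I_n}).

Definition laplacian W : 'M[R]_n :=
  \matrix_(i, j) (if i == j then \sum_(k | k != i) W i k else - W i j).

Definition subgraphb W F : bool :=
  [forall e in F, (e.1 != e.2) && (0 < W e.1 e.2)].

Definition outdeg F (x : 'I_n) : nat := #|[set y | (x, y) \in F]|.

Definition undir F : rel 'I_n := fun x y => ((x, y) \in F) || ((y, x) \in F).

Definition wcomp F (x : 'I_n) : {set 'I_n} := [set y | connect (undir F) x y].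

(* converging tree: one vertex (root) of outdegree 0, all others of
   outdegree 1 (weak connectivity of a weak component is automatic). *)
Definition converging_tree_on F (C : {set 'I_n}) : bool :=
  (#|[set y in C | outdeg F y == 0%N]| == 1%N) &&
  [forall y in C, (outdeg F y == 0%N) || (outdeg F y == 1%N)].

Definition in_forest W F : bool :=
  subgraphb W F && [forall x, converging_tree_on F (wcomp F x)].

Definition weight W F : R := \prod_(e in F) W e.1 e.2.

Definition Qk W (k : nat) : 'M[R]_n :=
  \matrix_(i, j) \sum_(F : {set 'I_n * 'I_n} |
       [&& in_forest W F, #|F| == k, j \in wcomp F i & outdeg F j == 0%N])
     weight W F.

(* Q(tau) = sum_{k >= 0} Q_k tau^k; any subgraph has at most #|'I_n * 'I_n|
   arcs, so Q_k = 0 for k > #|'I_n * 'I_n| and this finite sum is the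
   whole series. *)
Definition Qtau W (tau : R) : 'M[R]_n :=
  \sum_(k < #|{: 'I_n * 'I_n}|.+1) (tau ^+ k) *: Qk W k.

End Forests.

From HB Require Import structures.
From mathcomp Require Import all_boot all_order all_algebra.
Import Order.TTheory GRing.Theory Num.Theory.
Set Implicit Arguments. Unset Strict Implicit. Unset Printing Implicit Defensive.

(* An in-forest is the same thing as a map [g : 'I_n -> 'I_n] iterating into
   its fixed points, the roots: [g x] is the head of the arc leaving [x], and
   [q^k_ij] sums the weights of the maps with [k] non-fixed points along which
   [i] flows to [j].  For [L = D - W], [(L Q_k)_ij] is a sum over pairs (arc
   [i -> m], forest [g]); cutting the arc leaving [i], swapping it with
   [i -> m], or grafting the root [i] onto [m] are weight-preserving
   bijections which reduce this sum to the matrix-forest recurrence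
   [Q_(k+1) = sigma_(k+1) I - L Q_k], [sigma_(k+1)] being the total weight of
   the in-forests with [k+1] arcs.  So each [Q_k] is a polynomial in [L]. *)

Section RootedMaps.
Variable T : finType.
Implicit Types (f : T -> T) (x r i m : T) (k : nat).

(* A fixed point reachable from [x] is reached within [#|T|] steps, so it is
   then [sink f x]. *)
Definition sink f x := iter #|T| f x.
Definition settles f x := f (sink f x) == sink f x.
Definition rooted f := [forall x, settles f x].

Lemma sink_iter f x k : f (iter k f x) = iter k f x -> sink f x = iter k f x.
Proof.
move=> fix_k; have xr : fconnect f x (iter k f x) := fconnect_iter f k x.
have le_T : findex f x (iter k f x) <= #|T|.
  apply/ltnW/(leq_trans (findex_max xr)).
  by rewrite -size_orbit; have /card_uniqP <- := orbit_uniq f x; apply: max_card.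
by rewrite /sink -(subnK le_T) iterD iter_findex // iter_fix.
Qed.

Lemma sink_id f x : f x = x -> sink f x = x.
Proof. exact: (@sink_iter f x 0). Qed.

Lemma sink_fconnect f x r : f r = r -> fconnect f x r -> sink f x = r.
Proof. by move=> fr /iter_findex xr; rewrite -xr; apply: sink_iter; rewrite xr. Qed.

Lemma rootedP f :
  reflect (forall x, exists k, f (iter k f x) = iter k f x) (rooted f).
Proof.
apply: (iffP forallP) => [fix_sink x | ex_fix x].
  by exists #|T|; apply/eqP: (fix_sink x).
by have [k fix_k] := ex_fix x; rewrite /settles (sink_iter fix_k) fix_k.
Qed.

Lemma settles_step f x : settles f (f x) = settles f x.
Proof.
rewrite /settles /sink -iterSr iterS; apply/eqP/eqP => [fix_fs | fs]; last by rewrite !fs.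
rewrite -!iterS in fix_fs.
by have := sink_iter fix_fs; rewrite /sink iterS => /esym.
Qed.

Section Rooted.
Variables (f : T -> T) (rf : rooted f).

Lemma sink_fixed x : f (sink f x) = sink f x.
Proof. by move/forallP: rf => /(_ x)/eqP. Qed.

Lemma sink_step x : sink f (f x) = sink f x.
Proof. by rewrite /sink -iterSr iterS sink_fixed. Qed.

Lemma sink_moved x : f x != x -> sink f x != x.
Proof. by apply: contraNneq => sx; rewrite -sx sink_fixed. Qed.

Lemma rooted_periodic x k : iter k.+1 f x = x -> f x = x.
Proof.
move=> per; have per_t t : iter (t * k.+1) f x = x.
  by elim: t => // t IH; rewrite mulSn iterD IH per.
have le_T : #|T| <= #|T| * k.+1 by rewrite leq_pmulr.
have := per_t #|T|; rewrite -(subnK le_T) iterD iter_fix; last exact: sink_fixed.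
by move=> sx; rewrite -sx sink_fixed.
Qed.

End Rooted.

Definition redirect (f : {ffun T -> T}) i m : {ffun T -> T} :=
  [ffun x => if x == i then m else f x].

Implicit Types g : {ffun T -> T}.

Lemma redirectE g i m x : redirect g i m x = if x == i then m else g x.
Proof. by rewrite ffunE. Qed.

Lemma redirect_at g i m : redirect g i m i = m.
Proof. by rewrite redirectE eqxx. Qed.

Lemma redirectK g i m m' : redirect (redirect g i m) i m' = redirect g i m'.
Proof. by apply/ffunP => x; rewrite !redirectE; case: (x == i). Qed.

Lemma redirect_id g i : redirect g i (g i) = g.
Proof. by apply/ffunP => x; rewrite redirectE; case: eqP => // ->. Qed.

Lemma redirect_fixed g i : g i = i -> redirect g i i = g.
Proof. by move=> gi; rewrite -{2}gi redirect_id. Qed.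

Lemma iter_redirect g i m x k :
  (forall k', k' < k -> iter k' g x != i) -> iter k (redirect g i m) x = iter k g x.
Proof.
elim: k => //= k IH avoid; rewrite IH => [|k' lt_k']; last exact/avoid/ltnW.
by rewrite redirectE (negbTE (avoid k _)).
Qed.

Lemma sink_redirect_avoid g i m x :
  ~~ fconnect g x i -> sink (redirect g i m) x = sink g x.
Proof.
move=> avoid; rewrite /sink iter_redirect // => k' _.
by apply: contraNneq avoid => <-; apply: fconnect_iter.
Qed.

Lemma redirect_visit g i m x :
  fconnect g x i -> exists k, iter k (redirect g i m) x = i.
Proof.
move=> /iter_findex hit; have ex : exists k, iter k g x == i.
  by exists (findex g x i); rewrite hit.
case: (ex_minnP ex) => k /eqP hit_k min_k; exists k.
by rewrite iter_redirect // => k' lt_k'; apply/negP => /min_k; rewrite leqNgt lt_k'.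
Qed.

Lemma rooted_del_arc g i : rooted g -> rooted (redirect g i i).
Proof.
move=> rg; apply/rootedP => x; case: (boolP (fconnect g x i)) => [xi | avoid].
  by have [k hit] := redirect_visit i xi; exists k; rewrite hit redirect_at.
exists #|T|; rewrite -/(sink _ x) sink_redirect_avoid // redirectE.
have /negbTE -> : sink g x != i.
  by apply: contraNneq avoid => <-; apply: fconnect_iter.
exact: sink_fixed.
Qed.

Lemma sink_del_arc g i : rooted g -> g i != i -> sink (redirect g i i) (g i) = sink g i.
Proof.
move=> rg gi; rewrite sink_redirect_avoid ?sink_step //.
apply/negP => /iter_findex; rewrite -iterSr => /(rooted_periodic rg) gi_i.
by rewrite gi_i eqxx in gi.
Qed.

Section AddArc.
Variables (g : {ffun T -> T}) (i m : T).
Hypotheses (rg : rooted g) (gi : g i = i) (mi : sink g m != i).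

Let fixed_redirect x : sink g x != i -> redirect g i m (sink g x) = sink g x.
Proof. by move=> xi; rewrite redirectE (negbTE xi) sink_fixed. Qed.

Let avoid_root x : sink g x != i -> ~~ fconnect g x i.
Proof. by apply: contra => /(sink_fconnect gi)/eqP. Qed.

Lemma sink_add_arc x :
  sink (redirect g i m) x = if sink g x == i then sink g m else sink g x.
Proof.
case: ifP => [/eqP xi | /negbT xi]; last by rewrite sink_redirect_avoid ?avoid_root.
have [k hit] : exists k, iter k (redirect g i m) x = i.
  by apply: redirect_visit; rewrite -xi; apply: fconnect_iter.
have reach_m : iter (#|T| + k.+1) (redirect g i m) x = sink g m.
  by rewrite iterD iterS hit redirect_at -/(sink _ m) sink_redirect_avoid ?avoid_root.
by rewrite -reach_m; apply: sink_iter; rewrite reach_m fixed_redirect.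
Qed.

Lemma sink_add_arc_at : sink (redirect g i m) i = sink g m.
Proof. by rewrite sink_add_arc sink_id // eqxx. Qed.

Lemma rooted_add_arc : rooted (redirect g i m).
Proof.
apply/forallP => x; rewrite /settles sink_add_arc.
by case: ifPn => [_ | xi]; rewrite fixed_redirect.
Qed.

End AddArc.

Lemma rooted_add_arcE g i m :
  g i = i -> rooted (redirect g i m) && (m != i) = rooted g && (sink g m != i).
Proof.
move=> gi; apply/andP/andP => [[rg' mi] | [rg smi]].
  have g'i : redirect g i m i != i by rewrite redirect_at.
  have := sink_del_arc rg' g'i; rewrite redirectK redirect_fixed // redirect_at => ->.
  split; last exact: sink_moved.
  by rewrite -(redirect_fixed gi) -(redirectK g i m); apply: rooted_del_arc.
by split; [apply: rooted_add_arc | apply: contraNneq smi => ->; rewrite sink_id].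
Qed.

Lemma sink_cut g i x :
  rooted g -> sink (redirect g i i) x = i -> sink g x = sink g i.
Proof.
move=> rg cut; have [gi | gi] := eqVneq (g i) i.
  by move: cut; rewrite redirect_fixed // (sink_id gi).
set g0 := redirect g i i; have g0i : g0 i = i := redirect_at g i i.
have rg0 : rooted g0 := rooted_del_arc i rg.
have g0_gi : sink g0 (g i) != i by rewrite sink_del_arc // sink_moved.
have -> : g = redirect g0 i (g i) by rewrite redirectK redirect_id.
by rewrite sink_add_arc_at // sink_add_arc // cut eqxx.
Qed.

Definition moved g : {set T} := [set x | g x != x].

Lemma moved_eq0 g : (moved g == set0) = (g == [ffun x => x]).
Proof.
apply/eqP/eqP => [g_id | ->]; last by apply/setP => x; rewrite !inE ffunE eqxx.
apply/ffunP => x; rewrite ffunE; apply/eqP.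
have : x \notin moved g by rewrite g_id inE.
by rewrite inE negbK.
Qed.

Lemma moved_redirect g i m :
  m != i -> moved (redirect g i m) = i |: moved (redirect g i i).
Proof.
move=> mi; apply/setP => x; rewrite !inE !redirectE.
by case: (eqVneq x i) => [-> | _]; rewrite ?mi ?eqxx.
Qed.

Lemma card_moved_redirect g i m :
  m != i -> #|moved (redirect g i m)| = #|moved (redirect g i i)|.+1.
Proof. by move=> mi; rewrite moved_redirect // cardsU1 inE redirect_at eqxx. Qed.

Lemma eq_redirect_fixed g i : (redirect g i i == g) = (g i == i).
Proof. by apply/eqP/eqP => [<- | /redirect_fixed //]; rewrite redirect_at. Qed.

End RootedMaps.

Local Open Scope ring_scope.

Lemma sumr_involution_sub (V : zmodType) (I : finType) (P : pred I) (s : I -> I)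
    (a b : I -> V) :
  involutive s -> (forall x, P x -> P (s x)) ->
  (forall x, P x -> a (s x) = b x) -> \sum_(x | P x) (a x - b x) = 0.
Proof.
move=> sK Ps ab; rewrite sumrB (reindex_inj (inv_inj sK)) /=.
rewrite (eq_bigl P) => [|x]; last by apply/idP/idP => /Ps; rewrite ?sK.
by rewrite (eq_bigr b) ?subrr.
Qed.

Section ForestRecurrence.
Variables (R : comPzRingType) (T : finType) (w : T -> T -> R).
Implicit Types (g : {ffun T -> T}) (k : nat) (i j m x y : T).

Definition fweight g : R := \prod_(x in moved g) w x (g x).

Lemma fweight_redirect g i m :
  m != i -> fweight (redirect g i m) = w i m * fweight (redirect g i i).
Proof.
move=> mi; rewrite /fweight moved_redirect // big_setU1 /= ?inE ?redirect_at ?eqxx //.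
congr (_ * _); apply: eq_bigr => x; rewrite inE !redirectE.
by case: (eqVneq x i) => [-> | ]; rewrite ?eqxx.
Qed.

Definition forest k g : bool := rooted g && (#|moved g| == k).

Definition qforest k x y : R := \sum_(g | forest k g && (sink g x == y)) fweight g.

Definition forest_total k : R := \sum_(g | forest k g) fweight g.

Lemma forest0 g : forest 0 g = (g == [ffun x => x]).
Proof.
rewrite /forest cards_eq0 moved_eq0; case: eqP => [-> | _]; rewrite ?andbF //.
by rewrite andbT; apply/rootedP => x; exists 0%N; rewrite ffunE.
Qed.

Lemma qforestE k x y :
  qforest k x y = \sum_(g | forest k g) fweight g * (sink g x == y)%:R.
Proof.
by rewrite /qforest big_mkcondr; apply: eq_bigr => g _; case: eqP; rewrite ?mulr1 ?mulr0.
Qed.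

Lemma qforest0 x y : qforest 0 x y = (x == y)%:R.
Proof.
rewrite qforestE (big_pred1 [ffun z => z]) => [|g]; last exact: forest0.
have /eqP moved_id : moved [ffun z : T => z] == set0 by rewrite moved_eq0.
by rewrite /fweight moved_id big_set0 mul1r sink_id ?ffunE.
Qed.

Lemma forest_redirect k g i m :
  forest k (redirect g i m) && (m != i) =
  rooted (redirect g i i) && (sink (redirect g i i) m != i)
    && (#|moved (redirect g i i)|.+1 == k).
Proof.
have [-> | mi] := eqVneq m i.
  by rewrite sink_id ?redirect_at // eqxx !andbF.
have := rooted_add_arcE m (redirect_at g i i).
rewrite redirectK mi andbT /forest card_moved_redirect // => ->.
by rewrite andbT.
Qed.

Section Entry.
Variables (k : nat) (i j : T).
Implicit Type p : T * {ffun T -> T}.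

(* [term (m, g)] is the contribution of the arc [i -> m] and the forest [g]
   to [(L Q_k)_ij]; the pairs are sorted by the forest [redirect g i i]
   obtained by cutting the arc leaving [i]. *)
Let term p :=
  w i p.1 * fweight p.2 * ((sink p.2 i == j)%:R - (sink p.2 p.1 == j)%:R).

Lemma pair_expansion :
  \sum_m w i m * (qforest k i j - qforest k m j) = \sum_(p | forest k p.2) term p.
Proof.
under eq_bigr do rewrite !qforestE -sumrB mulr_sumr.
by rewrite pair_big /=; apply: eq_bigr => p _; rewrite -mulrBr mulrA.
Qed.

Lemma cut_terms :
  \sum_(p | forest k p.2 && (sink (redirect p.2 i i) p.1 == i)) term p = 0.
Proof.
apply: big1 => -[m g] /= /andP[/andP[rg _] /eqP/(sink_cut rg) cut].
by rewrite /term /= cut subrr mulr0.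
Qed.

Lemma swap_terms :
  \sum_(p | forest k p.2 && (sink (redirect p.2 i i) p.1 != i) && (p.2 i != i))
    term p = 0.
Proof.
under eq_bigr do rewrite /term mulrBr.
apply: (sumr_involution_sub (s := fun p => (p.2 i, redirect p.2 i p.1))).
- by move=> -[m g] /=; rewrite redirect_at redirectK redirect_id.
- move=> [m g] /= /andP[/andP[fg cut_m] gi].
  have := forest_redirect k g i (g i); rewrite redirect_id fg gi.
  move=> /esym/andP[/andP[rg0 cut_gi] card].
  by rewrite redirectK redirect_at andbAC forest_redirect rg0 cut_m cut_gi card.
move=> [m g] /= /andP[/andP[/andP[rg _] cut_m] gi]; set g0 := redirect g i i.
have g0i : g0 i = i := redirect_at g i i.
have /andP[rg0 cut_gi] : rooted g0 && (sink g0 (g i) != i).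
  by rewrite -rooted_add_arcE // redirectK redirect_id rg gi.
have mi : m != i by apply: contraNneq cut_m => ->; rewrite sink_id.
have sink_g : sink g m = sink g0 m.
  by rewrite -{1}(redirect_id g i) -(redirectK g i i) sink_add_arc // (negbTE cut_m).
have sink_g' : sink (redirect g i m) i = sink g0 m.
  by rewrite -(redirectK g i i) sink_add_arc_at.
have fweight_g : fweight g = w i (g i) * fweight g0.
  by rewrite -fweight_redirect ?redirect_id.
by rewrite sink_g sink_g' fweight_redirect // fweight_g mulrCA.
Qed.

Lemma graft_terms :
  \sum_(p | forest k p.2 && (sink (redirect p.2 i i) p.1 != i) && (p.2 i == i))
    term p =
  \sum_(g | forest k.+1 g && (g i != i))
    fweight g * ((i == j)%:R - (sink g i == j)%:R).
Proof.
rewrite [RHS](reindex_onto (fun p => redirect p.2 i p.1)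
                           (fun g => (g i, redirect g i i))) => [|g _].
  2: by rewrite redirectK redirect_id.
apply: eq_big => [[m g] | [m g]] /=.
  rewrite redirect_at redirectK xpair_eqE eqxx eq_redirect_fixed /=.
  have [gi | _] := eqVneq (g i) i; last by rewrite !andbF.
  by rewrite forest_redirect redirect_fixed // eqSS /forest !andbT andbAC.
move=> /andP[/andP[/andP[rg _] cut_m] /eqP gi]; rewrite redirect_fixed // in cut_m.
have mi : m != i by apply: contraNneq cut_m => ->; rewrite sink_id.
by rewrite /term /= fweight_redirect // redirect_fixed // sink_add_arc_at // sink_id.
Qed.

Lemma forest_recurrence_entry :
  \sum_m w i m * (qforest k i j - qforest k m j) + qforest k.+1 i j =
  (i == j)%:R * forest_total k.+1.
Proof.
rewrite pair_expansion (bigID (fun p => sink (redirect p.2 i i) p.1 == i)) /=.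
rewrite cut_terms add0r (bigID (fun p => p.2 i == i)) /= swap_terms addr0 graft_terms.
rewrite qforestE /forest_total [X in _ + X](bigID (fun g => g i == i)) /=.
rewrite [X in _ * X](bigID (fun g => g i == i)) /= mulrDr addrCA -big_split /=.
rewrite !mulr_sumr; congr (_ + _); apply: eq_bigr => g.
  by case/andP=> _ /eqP gi; rewrite sink_id // mulrC.
by rewrite mulrBr subrK mulrC.
Qed.

End Entry.

End ForestRecurrence.

Section ForestEncoding.
Variable n : nat.
Implicit Types (g : {ffun 'I_n -> 'I_n}) (F : {set 'I_n * 'I_n}) (x y : 'I_n).

Definition arcs g : {set 'I_n * 'I_n} := [set (x, g x) | x in moved g].

Definition parent F : {ffun 'I_n -> 'I_n} :=
  [ffun x => odflt x [pick y | (x, y) \in F]].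

Definition loopless_forest F : bool :=
  [forall e in F, e.1 != e.2] && [forall x, converging_tree_on F (wcomp F x)].

Lemma mem_arcs g x y : ((x, y) \in arcs g) = (g x == y) && (x != y).
Proof.
apply/imsetP/andP => [[z] | [/eqP <- x_gx]]; last by exists x; rewrite // inE eq_sym.
by rewrite inE => z_gz [-> ->]; rewrite eqxx eq_sym.
Qed.

Lemma card_arcs g : #|arcs g| = #|moved g|.
Proof. by rewrite card_imset // => x y []. Qed.

Lemma weight_arcs (R : realFieldType) (W : 'M[R]_n) g :
  weight W (arcs g) = fweight W g.
Proof. by rewrite /weight big_imset //= => x y _ _ []. Qed.

Lemma outdeg_arcs g x : outdeg (arcs g) x = (g x != x).
Proof.
rewrite /outdeg; have [gx | gx] := eqVneq (g x) x.
  by apply/eqP; rewrite cards_eq0; apply/eqP/setP => y; rewrite !inE mem_arcs gx andbN.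
rewrite (_ : [set y | _] = [set g x]) ?cards1 //.
apply/setP => y; rewrite !inE mem_arcs [y == _]eq_sym.
by case: eqP => // <-; rewrite eq_sym.
Qed.

Lemma undir_arcs g x y : undir (arcs g) x y -> g x = y \/ g y = x.
Proof.
by rewrite /undir !mem_arcs => /orP[/andP[/eqP] | /andP[/eqP]]; [left | right].
Qed.

Lemma connect_iter_arcs g x k : connect (undir (arcs g)) x (iter k g x).
Proof.
elim: k => [|k IH]; first exact: connect0.
apply: (connect_trans IH); rewrite iterS; set z := iter k g x.
have [-> | gz] := eqVneq (g z) z; first exact: connect0.
by apply: connect1; rewrite /undir mem_arcs eqxx eq_sym gz.
Qed.

Lemma sink_wcomp g x y : rooted g -> y \in wcomp (arcs g) x -> sink g y = sink g x.
Proof.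
move=> rg; have sink_closed : closed (undir (arcs g)) [pred z | sink g z == sink g x].
  by move=> a b /undir_arcs[<- | <-]; rewrite !inE sink_step.
by rewrite inE => /(closed_connect sink_closed); rewrite !inE eqxx => /esym/eqP.
Qed.

Lemma roots_arcs g x y :
  rooted g -> (y \in wcomp (arcs g) x) && (outdeg (arcs g) y == 0%N) = (sink g x == y).
Proof.
move=> rg; rewrite outdeg_arcs eqb0 negbK.
apply/andP/eqP => [[/(sink_wcomp rg) <- /eqP/sink_id //] | <-].
by rewrite inE (connect_iter_arcs g x #|'I_n|) sink_fixed.
Qed.

Lemma loopless_forest_arcs g : rooted g -> loopless_forest (arcs g).
Proof.
move=> rg; apply/andP; split.
  by apply/forall_inP => -[x y]; rewrite mem_arcs => /andP[].
apply/forallP => x; apply/andP; split.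
  rewrite (_ : [set y in _ | _] = [set sink g x]) ?cards1 //.
  by apply/setP => y; rewrite inE roots_arcs // inE eq_sym.
by apply/forall_inP => y _; rewrite outdeg_arcs; case: (g y != y).
Qed.

Lemma parent_arcs g : parent (arcs g) = g.
Proof.
apply/ffunP => x; rewrite ffunE; case: pickP => [y | no_arc] /=.
  by rewrite mem_arcs => /andP[/eqP].
by apply/eqP; apply: contraFT (no_arc (g x)); rewrite mem_arcs eqxx eq_sym.
Qed.

Section Loopless.
Variables (F : {set 'I_n * 'I_n}) (lF : loopless_forest F).

Lemma outdeg_le1 x : (outdeg F x <= 1)%N.
Proof.
have /andP[_ /forall_inP/(_ x)] := forallP (proj2 (andP lF)) x.
by rewrite inE connect0 => /(_ isT)/orP[] /eqP ->.
Qed.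

Lemma parent_arc x y : (x, y) \in F -> parent F x = y.
Proof.
move=> xy; rewrite ffunE; case: pickP => [z xz | /(_ y)]; last by rewrite xy.
by apply: (card_le1_eqP (outdeg_le1 x)); rewrite inE.
Qed.

Lemma arcs_parent : arcs (parent F) = F.
Proof.
apply/setP => -[x y]; rewrite mem_arcs.
case: (boolP ((x, y) \in F)) => [xy | no_xy].
  by rewrite (parent_arc xy) eqxx (forall_inP (proj1 (andP lF)) _ xy).
apply/negbTE; rewrite ffunE; case: pickP => [z xz /= | _ /=]; last by rewrite andbN.
by apply: contraNN no_xy => /andP[/eqP <-].
Qed.

Lemma rooted_parent : rooted (parent F).
Proof.
apply/forallP => x; have /andP[/cards1P[y0 roots_x] _] := forallP (proj2 (andP lF)) x.
have : y0 \in [set y in wcomp F x | outdeg F y == 0%N] by rewrite roots_x inE.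
rewrite !inE => /andP[x_y0 /eqP/card0_eq out0].
have settles_closed : closed (undir F) (settles (parent F)).
  by move=> a b /orP[/parent_arc <- | /parent_arc <-]; rewrite -!topredE /= settles_step.
have := closed_connect settles_closed x_y0; rewrite -!topredE /= => ->.
have parent_y0 : parent F y0 = y0.
  by rewrite ffunE; case: pickP => [z y0z | //]; have := out0 z; rewrite !inE y0z.
by rewrite /settles !(sink_id parent_y0) parent_y0.
Qed.

End Loopless.

End ForestEncoding.

Section ForestMatrices.
Variables (R : realFieldType) (n : nat) (W : 'M[R]_n).
Hypothesis W_ge0 : forall i j, 0 <= W i j.
Implicit Type F : {set 'I_n * 'I_n}.

Lemma in_forest_loopless F : in_forest W F -> loopless_forest F.
Proof.
case/andP=> /forall_inP sub trees; rewrite /loopless_forest trees andbT.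
by apply/forall_inP => e /sub /andP[].
Qed.

Lemma weight_not_in_forest F : loopless_forest F -> ~~ in_forest W F -> weight W F = 0.
Proof.
move=> /andP[/forall_inP loopless trees]; rewrite /in_forest trees andbT.
case/forall_inPn => e eF; rewrite negb_and loopless //= => W_e.
rewrite /weight (bigD1 e) //= (_ : W e.1 e.2 = 0) ?mul0r //.
by apply/eqP; rewrite eq_le W_ge0 andbT leNgt.
Qed.

Lemma Qk_qforest k : Qk W k = \matrix_(i, j) qforest W k i j.
Proof.
apply/matrixP => i j; rewrite !mxE.
transitivity (\sum_(F | loopless_forest F &&
    [&& #|F| == k, j \in wcomp F i & outdeg F j == 0%N]) weight W F).
  rewrite big_mkcond [RHS]big_mkcond; apply: eq_bigr => F _.
  have [inF | not_inF] := boolP (in_forest W F); first by rewrite in_forest_loopless.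
  case: (boolP (loopless_forest F)) => //= lF.
  by case: ifP => // _; rewrite weight_not_in_forest.
rewrite (reindex_onto (@arcs n) (@parent n)) => [|F /andP[lF _]]; last exact: arcs_parent.
apply: eq_big => g; last by rewrite weight_arcs.
rewrite parent_arcs eqxx andbT /forest.
have [rg | not_rg] := boolP (rooted g).
  by rewrite loopless_forest_arcs // card_arcs roots_arcs // andbA.
by apply: contraNF not_rg => /andP[/rooted_parent]; rewrite parent_arcs.
Qed.

Lemma laplacian_mulmxE (Q : 'M[R]_n) i j :
  (laplacian W *m Q) i j = \sum_m W i m * (Q i j - Q m j).
Proof.
rewrite mxE (bigD1 i) //= [RHS](bigD1 i) //= subrr mulr0 add0r mxE eqxx mulr_suml.
rewrite -big_split /=; apply: eq_bigr => m mi.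
by rewrite mxE eq_sym (negbTE mi) mulNr mulrBr.
Qed.

Lemma Qk0 : Qk W 0 = 1%:M.
Proof. by apply/matrixP => i j; rewrite Qk_qforest !mxE qforest0. Qed.

Lemma QkS k : Qk W k.+1 = (forest_total W k.+1)%:M - laplacian W *m Qk W k.
Proof.
apply/eqP; rewrite eq_sym subr_eq addrC eq_sym; apply/eqP/matrixP => i j.
rewrite mxE laplacian_mulmxE Qk_qforest.
under eq_bigr do rewrite !mxE.
by rewrite Qk_qforest mxE forest_recurrence_entry mxE mulr_natl.
Qed.

Lemma Qk_comm k M : laplacian W *m M = M *m laplacian W -> Qk W k *m M = M *m Qk W k.
Proof.
move=> LM; elim: k => [|k IH]; first by rewrite Qk0 mul1mx mulmx1.
by rewrite QkS mulmxBl mulmxBr mul_scalar_mx mul_mx_scalar -mulmxA IH mulmxA LM mulmxA.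
Qed.

End ForestMatrices.

Theorem corollary3 (R : realFieldType) (n : nat) (W : 'M[R]_n)
    (hn : (1 < n)%N)
    (hloop : forall i, W i i = 0)
    (hnonneg : forall i j, 0 <= W i j) :
  (forall (k : nat) (M : 'M[R]_n),
      laplacian W *m M = M *m laplacian W -> Qk W k *m M = M *m Qk W k) /\
  (forall k : nat, Qk W k *m laplacian W = laplacian W *m Qk W k) /\
  (forall (k : nat) (tau : R), Qk W k *m Qtau W tau = Qtau W tau *m Qk W k) /\
  (forall k l : nat, Qk W k *m Qk W l = Qk W l *m Qk W k).
Proof.
have comm_Q := Qk_comm hnonneg.
have comm_L k : Qk W k *m laplacian W = laplacian W *m Qk W k by apply: comm_Q.
split; first exact: comm_Q.
split=> //; split=> [k tau | k l]; apply: comm_Q => //.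
rewrite /Qtau mulmx_sumr mulmx_suml; apply: eq_bigr => l _.
by rewrite -scalemxAr -scalemxAl comm_L.
Qed.
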